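(* For all $C,\delta>0$ there are $\varepsilon>0$ and $n_0\in\mathbb N$ such that every $C$-bipartite-Ramsey graph $G=(V_1,V_2,E)$ with $|V_1|,|V_2|\ge n_0$ is $(\delta,\varepsilon)$-bipartite-rich.
   Context: A bipartite graph $G=(V_1,V_2,E)$ has vertex set $V_1\sqcup V_2$ and edge set $E\subset V_1\times V_2$; $N(v)$ is the neighbourhood of $v$ and $\overline{N}(v)$ its complement in the opposite class. Given $C>0$, $G$ is called $C$-bipartite-Ramsey if for all integers $t_1\ge C\log_2|V_1|$ and $t_2\ge C\log_2|V_2|$ there are no $T_1\subset V_1$, $T_2\subset V_2$ with $|T_1|=t_1$, $|T_2|=t_2$ such that all pairs in $T_1\times T_2$ are edges, or all are non-edges. Given $\delta,\varepsilon>0$, $G$ is $(\delta,\varepsilon)$-bipartite-rich if for each $i\in\{1,2\}$: for every $W\subset V_i$ with $|W|\ge\delta|V_i|$, there are at most $|V_{3-i}|^{1/5}$ vertices $v\in V_{3-i}$ such that $|N(v)\cap W|\le\varepsilon|W|$ or $|\overline{N}(v)\cap W|<\varepsilon|W|$. *)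

From mathcomp Require Import all_boot.
From Stdlib Require Import Reals.

Set Implicit Arguments. Unset Strict Implicit. Unset Printing Implicit Defensive.

Definition Rleb (x y : R) : bool := if Rle_dec x y then true else false.
Definition Rltb (x y : R) : bool := if Rlt_dec x y then true else false.

Definition log2 (x : R) : R := (ln x / ln 2)%R.

Definition bipartite_ramsey (V1 V2 : finType) (E : V1 -> V2 -> bool) (C : R) : Prop :=
  forall t1 t2 : nat,
    (C * log2 (INR #|V1|) <= INR t1)%R ->
    (C * log2 (INR #|V2|) <= INR t2)%R ->
    ~ (exists (T1 : {set V1}) (T2 : {set V2}),
          #|T1| = t1 /\ #|T2| = t2 /\
          ((forall x y, x \in T1 -> y \in T2 -> E x y) \/
           (forall x y, x \in T1 -> y \in T2 -> ~~ E x y))).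

Definition rich_side (A B : finType) (F : A -> B -> bool) (delta eps : R) : Prop :=
  forall W : {set B},
    (delta * INR #|B| <= INR #|W|)%R ->
    (INR #|[set a : A |
              Rleb (INR #|[set b in W | F a b]|) (eps * INR #|W|) ||
              Rltb (INR #|[set b in W | ~~ F a b]|) (eps * INR #|W|)]|
       <= Rpower (INR #|A|) (1/5))%R.

(* (delta, eps)-bipartite-rich: the condition for i = 1 (W in V1, v in V2)
   and for i = 2 (W in V2, v in V1). *)
Definition bipartite_rich (V1 V2 : finType) (E : V1 -> V2 -> bool) (delta eps : R) : Prop :=
  rich_side (fun (y : V2) (x : V1) => E x y) delta eps /\
  rich_side E delta eps.

From Stdlib Require Import Reals Lra Lia.
From Stdlib Require Znat.
(* Imported after Reals so that [^] on nat denotes [expn] rather than [Nat.pow]. *)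
From mathcomp Require Import all_boot zify.

Set Implicit Arguments. Unset Strict Implicit. Unset Printing Implicit Defensive.

(* Write X = ln |A|, Y = ln |B|, c = C / ln 2, and let tA, tB be the Ramsey thresholds
   (about c X and c Y).  Halving B once for each of 2 tA vertices of A leaves a set of
   size |B| / 4^tA to which each of them is complete or anticomplete; tA of them behave
   alike, so by the Ramsey property that set has fewer than tB elements.  Hence
   |B| < 4^tA tB, i.e. Y = O(X).
   Now let S be the vertices of A with at most |W| / N neighbours in W.  Picking tB
   vertices of W one at a time, each of degree at most 2/N times the current common
   non-neighbourhood in S (by averaging), keeps a (1 - 2/N)^tB fraction of S anticomplete
   to all of them; that part has fewer than tA elements, so
   |S| < (N / (N - 2))^tB tA <= exp (O(Y) / N) tA, which is below |A|^(1/5) / 2 once N is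
   large in terms of C.  Vertices with few non-neighbours are handled by complementing. *)

Lemma exists_subset_card (T : finType) (P : {set T}) k :
  k <= #|P| -> exists2 Q : {set T}, Q \subset P & #|Q| = k.
Proof.
rewrite -bin_gt0 -cards_draws => /card_gt0P [Q].
by rewrite inE => /andP [sQP /eqP cardQ]; exists Q.
Qed.

Lemma card_sep_predC (T : finType) (X : {set T}) (p : pred T) :
  #|[set x in X | p x]| + #|[set x in X | ~~ p x]| = #|X|.
Proof.
by rewrite -(cardsID [set x | p x] X); congr (_ + _); apply: eq_card => x; rewrite !inE andbC.
Qed.

Lemma card_sep_sum (T : finType) (X : {set T}) (p : pred T) :
  #|[set x in X | p x]| = \sum_(x in X) p x.
Proof. by rewrite -sum1dep_card big_mkcondr; apply: eq_bigr => x _; case: (p x). Qed.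

Section Homogeneous.

Variables (A B : finType) (F : A -> B -> bool).

Definition homogeneous (T1 : {set A}) (T2 : {set B}) : Prop :=
  (forall x y, x \in T1 -> y \in T2 -> F x y) \/
  (forall x y, x \in T1 -> y \in T2 -> ~~ F x y).

Definition homogeneous_free (t1 t2 : nat) : Prop :=
  forall (T1 : {set A}) (T2 : {set B}), #|T1| = t1 -> #|T2| = t2 -> ~ homogeneous T1 T2.

Lemma homogeneousS (T1 T1' : {set A}) (T2 T2' : {set B}) :
  T1' \subset T1 -> T2' \subset T2 -> homogeneous T1 T2 -> homogeneous T1' T2'.
Proof.
move=> /subsetP s1 /subsetP s2 [h|h]; [left|right] => x y /s1 hx /s2 hy; exact: h.
Qed.

Lemma exists_large_homogeneous_subset (s : seq A) (B0 : {set B}) :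
  exists2 B' : {set B}, B' \subset B0 &
    #|B0| <= 2 ^ size s * #|B'| /\ forall a, a \in s -> homogeneous [set a] B'.
Proof.
elim: s B0 => [|a s IH] B0; first by exists B0; rewrite ?expn0 ?mul1n.
have [v half_v] : exists v, #|B0| <= 2 * #|[set b in B0 | F a b == v]|.
  have := card_sep_predC B0 (F a).
  have -> : [set b in B0 | F a b] = [set b in B0 | F a b == true].
    by apply/setP => b; rewrite !inE eqb_id.
  have -> : [set b in B0 | ~~ F a b] = [set b in B0 | F a b == false].
    by apply/setP => b; rewrite !inE eqbF_neg.
  set n1 := #|[set b in B0 | _ == true]|; set n0 := #|[set b in B0 | _ == false]|.
  by case: (leqP n1 n0) => ?; [exists false | exists true]; lia.
have [B' sB' [cardB' homB']] := IH [set b in B0 | F a b == v].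
exists B'; first by apply: subset_trans sB' _; apply/subsetP => b; rewrite inE => /andP [].
split; first by rewrite expnS -mulnA (leq_trans half_v) // leq_mul2l cardB' orbT.
move=> a'; rewrite inE => /orP [/eqP -> | a's]; last exact: homB'.
have Fv y : y \in B' -> F a y = v by move/(subsetP sB'); rewrite inE => /andP [_ /eqP].
by case: v Fv {half_v sB' cardB'} => Fv; [left|right] => x y /set1P -> /Fv ->.
Qed.

Lemma card_le_of_homogeneous_free tA tB :
  homogeneous_free tA tB -> 2 * tA <= #|A| -> #|B| <= 4 ^ tA * tB.
Proof.
move=> free; rewrite -cardsT => /exists_subset_card [Q _ cardQ].
have [B' _ [cardB' homB']] := exists_large_homogeneous_subset (enum Q) [set: B].
rewrite cardsT -cardE cardQ expnM in cardB'.
suff small : #|B'| < tB by rewrite (leq_trans cardB') // leq_mul2l ltnW ?orbT.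
rewrite ltnNge; apply/negP => /exists_subset_card [TB sTB cardTB].
pose complete a := [forall b in B', F a b].
have homQ1 : homogeneous [set a in Q | complete a] B'.
  by left => x y; rewrite inE => /andP [_ /forall_inP]; apply.
have homQ0 : homogeneous [set a in Q | ~~ complete a] B'.
  right => x y; rewrite inE => /andP [xQ incomplete] yB'.
  have := homB' x; rewrite mem_enum => /(_ xQ) [allF|noF]; last by apply: noF; rewrite ?set11.
  by case/forall_inP: incomplete => b bB'; apply: allF; rewrite ?set11.
have splitQ := card_sep_predC Q complete; rewrite cardQ in splitQ.
have [Qh homQh largeQh] : exists2 Qh, homogeneous Qh B' & tA <= #|Qh|.
  case: (leqP tA #|[set a in Q | complete a]|) => ?;
    [exists [set a in Q | complete a] | exists [set a in Q | ~~ complete a]] => //; lia.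
have [TA sTA cardTA] := exists_subset_card largeQh.
exact: free TA TB cardTA cardTB (homogeneousS sTA sTB homQh).
Qed.

Lemma double_count (S : {set A}) (W : {set B}) :
  \sum_(b in W) #|[set a in S | F a b]| = \sum_(a in S) #|[set b in W | F a b]|.
Proof.
under eq_bigr do rewrite card_sep_sum.
by rewrite exchange_big; apply: eq_bigr => a _; rewrite card_sep_sum.
Qed.

Lemma exists_low_degree (S : {set A}) (W W' : {set B}) N :
  W' \subset W -> 0 < #|W'| -> #|W| <= 2 * #|W'| ->
  (forall a, a \in S -> N * #|[set b in W | F a b]| <= #|W|) ->
  exists2 b, b \in W' & N * #|[set a in S | F a b]| <= 2 * #|S|.
Proof.
move=> sW'W W'_gt0 W_le sparse; have [b0 b0W'] := card_gt0P W'_gt0.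
pose d b := #|[set a in S | F a b]|.
case: (arg_minnP d b0W') => b bW' bmin; exists b => //.
have sum_le : N * \sum_(b' in W') d b' <= #|S| * #|W|.
  rewrite double_count big_distrr -sum_nat_const /=; apply: leq_sum => a aS.
  apply: leq_trans (sparse a aS); rewrite leq_mul2l subset_leq_card ?orbT //.
  by apply/subsetP => y; rewrite !inE => /andP [/(subsetP sW'W) -> ->].
have min_le : #|W'| * d b <= \sum_(b' in W') d b'.
  by rewrite -sum_nat_const; apply: leq_sum.
rewrite -/(d b) -(leq_pmul2l W'_gt0); nia.
Qed.

Lemma greedy_anticomplete (S : {set A}) (W : {set B}) N k :
  (forall a, a \in S -> N * #|[set b in W | F a b]| <= #|W|) -> 2 * k <= #|W| ->
  exists2 T : {set B}, T \subset W /\ #|T| = k &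
    (N - 2) ^ k * #|S| <= N ^ k * #|[set a in S | T \subset [set b | ~~ F a b]]|.
Proof.
move=> sparse; elim: k => [|k IH] k_le.
  exists set0; first by rewrite sub0set cards0.
  rewrite !expn0 !mul1n subset_leq_card //.
  by apply/subsetP => a aS; rewrite inE aS sub0set.
have /IH [T [sTW cardT] countT] : 2 * k <= #|W| by lia.
set S' := [set a in S | T \subset [set b | ~~ F a b]] in countT.
have cardWT : #|W :\: T| = #|W| - k by rewrite cardsD (setIidPr sTW) cardT.
have [b bWT low_b] := @exists_low_degree S' W (W :\: T) N (subsetDl W T)
  ltac:(lia) ltac:(lia) (fun a aS' => sparse a (setIdP aS').1).
have [bT bW] : b \notin T /\ b \in W by apply/andP; rewrite -in_setD.
exists (b |: T); first by rewrite subUset sub1set bW sTW cardsU1 bT cardT.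
have -> : [set a in S | b |: T \subset [set b0 | ~~ F a b0]] = [set a in S' | ~~ F a b].
  by apply/setP => a; rewrite !inE subUset sub1set inE -andbA [~~ F a b && _]andbC.
have := card_sep_predC S' (F^~ b); set d := #|[set a in S' | F a b]| in low_b *.
set e := #|[set a in S' | ~~ F a b]| => split_S'.
have step : (N - 2) * #|S'| <= N * e by nia.
rewrite !expnS -!mulnA (leq_trans (leq_mul (leqnn _) countT)) //.
by rewrite mulnCA [X in _ <= X]mulnCA leq_mul2l step orbT.
Qed.

Lemma card_sparse_lt (W : {set B}) N tA tB :
  0 < N -> homogeneous_free tA tB -> 2 * tB <= #|W| ->
  (N - 2) ^ tB * #|[set a | N * #|[set b in W | F a b]| <= #|W|]| < N ^ tB * tA.
Proof.
move=> N_gt0 free tB_le.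
set S := [set a | _].
have sparse a : a \in S -> N * #|[set b in W | F a b]| <= #|W| by rewrite inE.
have [T [sTW cardT] countT] := greedy_anticomplete sparse tB_le.
apply: leq_ltn_trans countT _; rewrite ltn_mul2l expn_gt0 N_gt0 /= ltnNge.
apply/negP => /exists_subset_card [TA sTA cardTA].
apply: (free TA T cardTA cardT); right => x y /(subsetP sTA).
by rewrite inE => /andP [_ /subsetP anti] /anti; rewrite inE.
Qed.
End Homogeneous.

Local Open Scope R_scope.

Section RamseyGraphs.

Variables (A B : finType) (F : A -> B -> bool).

Lemma bipartite_ramsey_free (C : R) (t1 t2 : nat) :
  bipartite_ramsey F C -> C * log2 (INR #|A|) <= INR t1 ->
  C * log2 (INR #|B|) <= INR t2 -> homogeneous_free F t1 t2.
Proof.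
by move=> ramsey le1 le2 T1 T2 card1 card2 hom; apply: (ramsey t1 t2 le1 le2); exists T1, T2.
Qed.

Lemma bipartite_ramsey_neg (C : R) :
  bipartite_ramsey F C -> bipartite_ramsey (fun x y => ~~ F x y) C.
Proof.
move=> ramsey t1 t2 le1 le2 [T1 [T2 [card1 [card2 hom]]]].
apply: (ramsey t1 t2 le1 le2); exists T1, T2; do 2!split => //.
by case: hom => hom; [right|left] => x y xT1 yT2; rewrite -[F x y]negbK hom.
Qed.

Lemma bipartite_ramsey_flip (C : R) :
  bipartite_ramsey F C -> bipartite_ramsey (fun y x => F x y) C.
Proof.
move=> ramsey t2 t1 le2 le1 [T2 [T1 [card2 [card1 hom]]]].
apply: (ramsey t1 t2 le1 le2); exists T1, T2; do 2!split => //.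
by case: hom => hom; [left|right] => x y xT1 yT2; apply: hom.
Qed.

End RamseyGraphs.

Definition nat_up (x : R) : nat := Z.to_nat (up x).

Lemma nat_up_spec x : 0 <= x -> x < INR (nat_up x) <= x + 1.
Proof.
move=> x_ge0; have [gt_up le_up] := archimed x.
have up_ge0 : (0 <= up x)%Z by apply: le_IZR; lra.
by rewrite /nat_up INR_IZR_INZ Znat.Z2Nat.id //; lra.
Qed.

Lemma INR_expn m n : INR (m ^ n)%N = INR m ^ n.
Proof. by elim: n => [|n IH]; rewrite ?expn0 // expnS mult_INR IH. Qed.

Lemma exp_le_exp x y : exp x <= exp y <-> x <= y.
Proof.
split=> [le_exp | [lt_xy | ->]]; last lra; last exact/Rlt_le/exp_increasing.
by apply: Rnot_lt_le => lt_yx; have := exp_increasing _ _ lt_yx; lra.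
Qed.

Lemma exp_ln_ge z x : exp z <= x -> exp (ln x) = x /\ z <= ln x.
Proof.
move=> le_x; have x_gt0 : 0 < x by have := exp_pos z; lra.
by rewrite exp_ln //; split => //; apply/exp_le_exp; rewrite exp_ln.
Qed.

Lemma exp_pow x n : exp x ^ n = exp (INR n * x).
Proof.
by rewrite -Rpower_pow; [rewrite /Rpower ln_exp | apply: exp_pos].
Qed.

Lemma four_le_exp2 : 4 <= exp 2.
Proof.
have e_ge2 : 2 <= exp 1 by have := exp_ineq1_le 1; lra.
have -> : exp 2 = exp 1 * exp 1 by rewrite -exp_plus; congr exp; lra.
nra.
Qed.

Lemma exp_dominates_linear K L :
  0 < L -> exists z0, forall z, z0 <= z -> K * z <= exp (L * z).
Proof.
move=> L_gt0; exists (4 * Rabs K / (L * L)) => z z_ge.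
have K_le := Rle_abs K; have abs_ge0 := Rabs_pos K.
have LL_gt0 : 0 < L * L by nra.
have absK_le : 4 * Rabs K <= L * L * z.
  have := Rmult_le_compat_r _ _ _ (Rlt_le _ _ LL_gt0) z_ge.
  by rewrite /Rdiv Rmult_assoc Rinv_l ?Rmult_1_r; nra.
have z_ge0 : 0 <= z by nra.
have half := exp_ineq1_le (L * z / 2).
have sq_le : (1 + L * z / 2) * (1 + L * z / 2) <= exp (L * z / 2) * exp (L * z / 2).
  by apply: Rmult_le_compat; nra.
have -> : exp (L * z) = exp (L * z / 2) * exp (L * z / 2).
  by rewrite -exp_plus; congr exp; field.
nra.
Qed.

Definition log_large (c δ z : R) : Prop :=
  [/\ 20 <= z, 2 * (c * z + 1) <= exp z, 2 * (c * z + 1) <= δ * exp z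
    & c * z + 1 <= exp (z / 20)].

Lemma log_large_eventually c δ :
  0 < δ -> exists Z0, forall z, Z0 <= z -> log_large c δ z.
Proof.
move=> δ_gt0.
have [z1 dom1] := exp_dominates_linear (2 * c + 2) Rlt_0_1.
have [z2 dom2] := exp_dominates_linear ((2 * c + 2) / δ) Rlt_0_1.
have [z3 dom3] := exp_dominates_linear (c + 1) (Rinv_0_lt_compat 20 ltac:(lra)).
exists (20 + Rabs z1 + Rabs z2 + Rabs z3) => z z_ge.
have := Rle_abs z1; have := Rle_abs z2; have := Rle_abs z3.
have := Rabs_pos z1; have := Rabs_pos z2; have := Rabs_pos z3.
move=> *; have {dom1}dom1 := dom1 z ltac:(lra); have {dom2}dom2 := dom2 z ltac:(lra).
have {dom3}dom3 := dom3 z ltac:(lra).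
have z20 : / 20 * z = z / 20 by field.
rewrite z20 in dom3.
rewrite Rmult_1_l in dom1 dom2; split; try nra.
have := Rmult_le_compat_l _ _ _ (Rlt_le _ _ δ_gt0) dom2.
have -> : δ * ((2 * c + 2) / δ * z) = (2 * c + 2) * z by field; lra.
nra.
Qed.

Lemma le_of_exp_le_pow4 (u Y v : R) (t : nat) :
  INR t <= u -> 0 <= v <= exp (Y / 20) -> exp Y <= 4 ^ t * v -> Y <= 4 * u.
Proof.
move=> t_le [v_ge0 v_le] expY_le.
have pow4_le : 4 ^ t <= exp (2 * u).
  apply: (Rle_trans _ (exp 2 ^ t)); first by apply: pow_incr; have := four_le_exp2; lra.
  by rewrite exp_pow; apply/exp_le_exp; lra.
have : exp Y <= exp (2 * u + Y / 20).
  have pow4_ge0 : 0 <= 4 ^ t by apply: pow_le; lra.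
  by rewrite exp_plus; apply: (Rle_trans _ _ _ expY_le); apply: Rmult_le_compat.
move/exp_le_exp; have := pos_INR t; lra.
Qed.

Lemma exp_pow_mul_le_exp_fifth (c X Y : R) (tA tB : nat) :
  0 < c -> 20 <= X -> INR tA <= c * X + 1 <= exp (X / 20) ->
  INR tB <= c * Y + 1 -> Y <= 4 * (c * X + 1) ->
  2 * (exp (/ (80 * c * c + 4 * c + 1)) ^ tB * INR tA) <= exp (X / 5).
Proof.
move=> c_gt0 X_ge [tA_le tA_exp] tB_le Y_le.
(* D is chosen so that tB <= c Y + 1 <= 4 c^2 X + 4 c + 1 <= D (X / 20 + 1). *)
set D := 80 * c * c + 4 * c + 1; have D_gt0 : 0 < D by rewrite /D; nra.
have tB_D : INR tB <= D * (X / 20 + 1) by rewrite /D; nra.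
have tB_exp : INR tB * / D <= X / 20 + 1.
  have := Rmult_le_compat_r (/ D) _ _ (Rlt_le _ _ (Rinv_0_lt_compat _ D_gt0)) tB_D.
  by have -> : D * (X / 20 + 1) * / D = X / 20 + 1 by field; lra.
have e_ge2 : 2 <= exp 1 by have := exp_ineq1_le 1; lra.
have e2_le : exp 2 <= exp (X / 10) by apply/exp_le_exp; lra.
have -> : exp (X / 5) = exp (X / 10) * exp (X / 10) by rewrite -exp_plus; congr exp; field.
have le_e1 : exp (/ D) ^ tB * INR tA <= exp 1 * exp (X / 10).
  rewrite exp_pow; have -> : X / 10 = X / 20 + X / 20 by field.
  rewrite exp_plus -Rmult_assoc -exp_plus; apply: Rmult_le_compat; try lra.
  - by left; apply: exp_pos.
  - exact: pos_INR.
  - by apply/exp_le_exp; lra.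
have exp2 : exp 2 = exp 1 * exp 1 by rewrite -exp_plus; congr exp; lra.
rewrite exp2 in e2_le; have := exp_pos (X / 10); nra.
Qed.

Lemma lt_pow_mul_of_le_mul (p q e s t : R) (k : nat) :
  0 < p -> 0 <= q <= p * e -> 0 <= t -> p ^ k * s < q ^ k * t -> s < e ^ k * t.
Proof.
move=> p_gt0 [q_ge0 q_le] t_ge0 lt_pq.
have qk_le : q ^ k <= p ^ k * e ^ k by rewrite -Rpow_mult_distr; apply: pow_incr.
apply: (Rmult_lt_reg_l (p ^ k)); first exact: pow_lt.
by apply: (Rlt_le_trans _ _ _ lt_pq); rewrite -Rmult_assoc; apply: Rmult_le_compat_r.
Qed.

Lemma exists_nat_ratio_le_exp β :
  0 < β -> exists2 N : nat, (2 < N)%N & INR N <= INR (N - 2) * exp β.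
Proof.
move=> β_gt0; have ratio_gt0 : 0 < 2 / β by apply: Rdiv_lt_0_compat; lra.
have [M_gt _] := nat_up_spec (Rlt_le _ _ ratio_gt0); set M := nat_up (2 / β) in M_gt *.
have M_pos : (0 < M)%N by apply/ltP/INR_lt; simpl INR; lra.
exists (M + 2)%N; first by rewrite addn2 ltnS.
rewrite addnK plus_INR; have := exp_ineq1_le β.
have : 2 <= β * INR M.
  by have := Rmult_lt_compat_l _ _ _ β_gt0 M_gt; rewrite /Rdiv Rmult_comm Rmult_assoc Rinv_l; lra.
simpl INR; have := pos_INR M; nra.
Qed.

Section SparseVertices.

Variables (A B : finType) (F : A -> B -> bool) (C δ Z0 : R) (N : nat).
Let c := C / ln 2.
Hypotheses (C_gt0 : 0 < C) (N_gt2 : (2 < N)%N).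
Hypothesis N_ratio : INR N <= INR (N - 2) * exp (/ (80 * c * c + 4 * c + 1)).
Hypothesis Z0_large : forall z, Z0 <= z -> log_large c δ z.
Hypotheses (A_large : exp Z0 <= INR #|A|) (B_large : exp Z0 <= INR #|B|).
Hypothesis ramsey : bipartite_ramsey F C.

Let X := ln (INR #|A|).
Let Y := ln (INR #|B|).
Let tA := nat_up (c * X).
Let tB := nat_up (c * Y).

Let c_gt0 : 0 < c.
Proof. by apply: Rdiv_lt_0_compat => //; have := ln_lt_2; lra. Qed.

Let C_log2 x : C * log2 x = c * ln x.
Proof. by rewrite /log2 /c; field; have := ln_lt_2; lra. Qed.

Let X_large : exp X = INR #|A| /\ log_large c δ X.
Proof. by have [expX X_ge] := exp_ln_ge A_large; split => //; apply: Z0_large. Qed.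

Let Y_large : exp Y = INR #|B| /\ log_large c δ Y.
Proof. by have [expY Y_ge] := exp_ln_ge B_large; split => //; apply: Z0_large. Qed.

Let tA_spec : c * X < INR tA <= c * X + 1.
Proof. by case: X_large => _ [X_ge *]; apply: nat_up_spec; nra. Qed.

Let tB_spec : c * Y < INR tB <= c * Y + 1.
Proof. by case: Y_large => _ [Y_ge *]; apply: nat_up_spec; nra. Qed.

Let free : homogeneous_free F tA tB.
Proof.
apply: (bipartite_ramsey_free ramsey); rewrite C_log2; apply: Rlt_le.
  by case: tA_spec.
by case: tB_spec.
Qed.

Let ln_card_B_le : Y <= 4 * (c * X + 1).
Proof.
have [expX [_ X_exp _ _]] := X_large; have [expY [_ _ _ Y_exp]] := Y_large.
have [_ tA_le] := tA_spec; have [_ tB_le] := tB_spec.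
have tA_small : (2 * tA <= #|A|)%N.
  by apply/leP/INR_le; rewrite mult_INR -expX (INR_IZR_INZ 2) [Z.of_nat 2]/=; lra.
have := le_INR _ _ (leP (card_le_of_homogeneous_free free tA_small)).
rewrite mult_INR INR_expn -expY (INR_IZR_INZ 4) [Z.of_nat 4]/= => expY_le.
apply: (le_of_exp_le_pow4 tA_le _ expY_le); split; first exact: pos_INR.
lra.
Qed.

Lemma card_sparse_le (W : {set B}) :
  δ * INR #|B| <= INR #|W| ->
  2 * INR #|[set a | (N * #|[set b in W | F a b]| <= #|W|)%N]| <= exp (X / 5).
Proof.
move=> W_large.
have [_ [X_ge _ _ X_exp]] := X_large; have [expY [_ _ Y_exp _]] := Y_large.
have [_ tA_le] := tA_spec; have [_ tB_le] := tB_spec.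
have tB_small : (2 * tB <= #|W|)%N.
  rewrite expY in Y_exp.
  by apply/leP/INR_le; rewrite mult_INR (INR_IZR_INZ 2) [Z.of_nat 2]/=; lra.
have N2_gt0 : 0 < INR (N - 2) by apply: (lt_INR 0); apply/ltP; rewrite subn_gt0.
have := lt_INR _ _ (ltP (card_sparse_lt (ltnW (ltnW N_gt2)) free tB_small)).
rewrite !mult_INR !INR_expn => count_lt.
have S_lt := lt_pow_mul_of_le_mul N2_gt0 (conj (pos_INR N) N_ratio) (pos_INR tA) count_lt.
have := exp_pow_mul_le_exp_fifth c_gt0 X_ge (conj tA_le X_exp) tB_le ln_card_B_le.
lra.
Qed.

End SparseVertices.

Lemma rich_side_of_ramsey (A B : finType) (F : A -> B -> bool) (C δ Z0 : R) (N : nat) :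
  let c := C / ln 2 in
  0 < C -> (2 < N)%N -> INR N <= INR (N - 2) * exp (/ (80 * c * c + 4 * c + 1)) ->
  (forall z, Z0 <= z -> log_large c δ z) ->
  exp Z0 <= INR #|A| -> exp Z0 <= INR #|B| ->
  bipartite_ramsey F C -> rich_side F δ (/ INR N).
Proof.
move=> c C_gt0 N_gt2 N_ratio Z0_large A_large B_large ramsey W W_large.
have sparse := card_sparse_le C_gt0 N_gt2 N_ratio Z0_large A_large B_large ramsey W_large.
have dense := card_sparse_le C_gt0 N_gt2 N_ratio Z0_large A_large B_large
  (bipartite_ramsey_neg ramsey) W_large.
set S1 := [set a | _] in sparse; set S0 := [set a | _] in dense.
have N_gt0 : 0 < INR N by apply: (lt_INR 0); apply/ltP/(ltn_trans _ N_gt2).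
have eps_le d : INR d <= / INR N * INR #|W| -> (N * d <= #|W|)%N.
  move=> le_d; apply/leP/INR_le; rewrite mult_INR.
  have := Rmult_le_compat_l _ _ _ (Rlt_le _ _ N_gt0) le_d.
  by rewrite -Rmult_assoc Rinv_r ?Rmult_1_l //; exact: Rgt_not_eq.
set S := [set a | _ || _].
have sub : S \subset S1 :|: S0.
  apply/subsetP => a; rewrite !inE /Rleb /Rltb.
  case: Rle_dec => [le_a | _] /=; first by rewrite eps_le.
  by case: Rlt_dec => [lt_a | _] //= _; rewrite (eps_le _ (Rlt_le _ _ lt_a)) orbT.
have := le_INR _ _ (leP (leq_trans (subset_leq_card sub) (leq_card_setU S1 S0))).
rewrite plus_INR /Rpower; have -> : 1 / 5 * ln (INR #|A|) = ln (INR #|A|) / 5 by field.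
lra.
Qed.

Theorem lemma2p5 :
  forall C delta : R, (0 < C)%R -> (0 < delta)%R ->
  exists (eps : R) (n0 : nat), (0 < eps)%R /\
    forall (V1 V2 : finType) (E : V1 -> V2 -> bool),
      (n0 <= #|V1|)%N -> (n0 <= #|V2|)%N ->
      bipartite_ramsey E C ->
      bipartite_rich E delta eps.
Proof.
move=> C δ C_gt0 δ_gt0; set c := C / ln 2.
have β_gt0 : 0 < / (80 * c * c + 4 * c + 1).
  have c_gt0 : 0 < c by apply: Rdiv_lt_0_compat => //; have := ln_lt_2; lra.
  by apply: Rinv_0_lt_compat; nra.
have [N N_gt2 N_ratio] := exists_nat_ratio_le_exp β_gt0.
have [Z0 Z0_large] := log_large_eventually c δ_gt0.
exists (/ INR N), (nat_up (exp Z0)); split.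
  by apply/Rinv_0_lt_compat/(lt_INR 0)/ltP/(ltn_trans _ N_gt2).
move=> V1 V2 E V1_large V2_large ramsey.
have large n : (nat_up (exp Z0) <= n)%N -> exp Z0 <= INR n.
  by move/leP/le_INR; have [up_gt _] := nat_up_spec (Rlt_le _ _ (exp_pos Z0)); lra.
split; apply: rich_side_of_ramsey N_gt2 N_ratio Z0_large _ _ _ => //; try exact: large.
exact: bipartite_ramsey_flip.
Qed.
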